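(* For any $\mathfrak{Q}$-distributors $\phi,\psi$ from $X$ to $Y$ between $\mathfrak{Q}$-preordered $\mathfrak{Q}$-subsets, $$\phi=\psi\iff\phi_{\uparrow}=\psi_{\uparrow}\iff\phi^{\downarrow}=\psi^{\downarrow}\iff\phi^{*}=\psi^{*}\iff\phi^{\dagger}=\psi^{\dagger}.$$
   Context: $(\mathfrak{Q},\&,e)$ is a non-trivial unital quantale (complete lattice with associative multiplication with unit $e$ preserving joins in each variable, $\bot<e$), implications $p\& q\le r\iff p\le r/ q\iff q\le p\backslash r$, $\mathcal{D}\mathfrak{Q}(p,q)=\{u\mid (u/ p)\& p=u=q\&(q\backslash u)\}$. A $\mathfrak{Q}$-subset is a set with $|\cdot|\colon X\to\mathfrak{Q}$; $\mathbf{1}_q$ is $\{*\}$ with $|*|=q$. A $\mathfrak{Q}$-relation from $X$ to $Y$ is a map $\phi\colon X\times Y\to\mathfrak{Q}$ with $\phi(x,y)\in\mathcal{D}\mathfrak{Q}(|x|,|y|)$, ordered pointwise; composition $(\psi\circ\phi)(x,z)=\bigvee_y(\psi(y,z)/|y|)\&\phi(x,y)$; $\xi\swarrow\phi$ is the largest $\psi'$ with $\psi'\circ\phi\le\xi$ and $\psi\searrow\xi$ the largest $\phi'$ with $\psi\circ\phi'\le\xi$. A $\mathfrak{Q}$-preordered $\mathfrak{Q}$-subset is a $\mathfrak{Q}$-subset $X$ with a $\mathfrak{Q}$-relation $1_X^{\natural}$ on $X$ with $\mathrm{id}_X\le 1_X^{\natural}$ ($\mathrm{id}_X(x,x)=|x|$,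 else $\bot$) and $1_X^{\natural}\circ 1_X^{\natural}\le 1_X^{\natural}$. A $\mathfrak{Q}$-distributor from $X$ to $Y$ is a $\mathfrak{Q}$-relation $\phi$ with $1_Y^{\natural}\circ\phi\circ 1_X^{\natural}\le\phi$. $\mathsf{P}X$ is the set of $\mathfrak{Q}$-relations $\mu$ from $X$ to some $\mathbf{1}_q$ with $\mu\circ 1_X^{\natural}\le\mu$; $\mathsf{P}^{\dagger}X$ is the set of $\mathfrak{Q}$-relations $\lambda$ from some $\mathbf{1}_q$ to $X$ with $1_X^{\natural}\circ\lambda\le\lambda$. For a $\mathfrak{Q}$-distributor $\phi$ from $X$ to $Y$: $\phi_{\uparrow}\colon\mathsf{P}X\to\mathsf{P}^{\dagger}Y$, $\mu\mapsto\phi\swarrow\mu$; $\phi^{\downarrow}\colon\mathsf{P}^{\dagger}Y\to\mathsf{P}X$, $\lambda'\mapsto\lambda'\searrow\phi$; $\phi^{*}\colon\mathsf{P}Y\to\mathsf{P}X$, $\mu'\mapsto\mu'\circ\phi$; $\phi^{\dagger}\colon\mathsf{P}^{\dagger}X\to\mathsf{P}^{\dagger}Y$, $\lambda\mapsto\phi\circ\lambda$. *)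

Set Implicit Arguments.
Unset Strict Implicit.

Record Quantale := {
  qcar :> Type;
  qle : qcar -> qcar -> Prop;
  qsup : (qcar -> Prop) -> qcar;
  qmul : qcar -> qcar -> qcar;
  qe : qcar;
  qle_refl : forall a, qle a a;
  qle_trans : forall a b c, qle a b -> qle b c -> qle a c;
  qle_antisym : forall a b, qle a b -> qle b a -> a = b;
  qsup_ub : forall (S : qcar -> Prop) a, S a -> qle a (qsup S);
  qsup_least : forall (S : qcar -> Prop) b,
      (forall a, S a -> qle a b) -> qle (qsup S) b;
  qmul_assoc : forall a b c, qmul a (qmul b c) = qmul (qmul a b) c;
  qmul_e_l : forall a, qmul qe a = a;
  qmul_e_r : forall a, qmul a qe = a;
  qmul_sup_l : forall (S : qcar -> Prop) a,
      qmul (qsup S) a = qsup (fun v => exists b, S b /\ v = qmul b a);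
  qmul_sup_r : forall (S : qcar -> Prop) a,
      qmul a (qsup S) = qsup (fun v => exists b, S b /\ v = qmul a b);
  qbot_lt_e : qsup (fun _ => False) <> qe
}.

Section Q.
Variable Q : Quantale.

Definition qbot : Q := qsup (fun _ => False).

Definition rdiv (r q : Q) : Q := qsup (fun p => qle (qmul p q) r).
Definition ldiv (p r : Q) : Q := qsup (fun q => qle (qmul p q) r).

Definition inDQ (p q u : Q) : Prop :=
  qmul (rdiv u p) p = u /\ u = qmul q (ldiv q u).

Record QSubset := { qs_car :> Type; qs_val : qs_car -> Q }.

Definition one (q : Q) : QSubset := {| qs_car := unit; qs_val := fun _ => q |}.

Definition QRelType (X Y : QSubset) := X -> Y -> Q.

Definition is_Qrel (X Y : QSubset) (phi : QRelType X Y) : Prop :=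
  forall x y, inDQ (qs_val x) (qs_val y) (phi x y).

Definition rle (X Y : QSubset) (phi psi : QRelType X Y) : Prop :=
  forall x y, qle (phi x y) (psi x y).

Definition compose (X Y Z : QSubset) (psi : QRelType Y Z) (phi : QRelType X Y)
  : QRelType X Z :=
  fun x z => qsup (fun v => exists y : Y,
                      v = qmul (rdiv (psi y z) (qs_val y)) (phi x y)).

(* id_X(x,x) = |x|, id_X(x,x') = bottom otherwise *)
Definition idrel (X : QSubset) : QRelType X X :=
  fun x x' => qsup (fun v => x = x' /\ v = qs_val x).

(* xi ↙ phi : the largest Q-relation psi' (from Y to Z) with psi' o phi <= xi,
   for phi : X -> Y, xi : X -> Z; realised as the pointwise join of all such. *)
Definition lift_left (X Y Z : QSubset) (xi : QRelType X Z) (phi : QRelType X Y)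
  : QRelType Y Z :=
  fun y z => qsup (fun v => exists psi' : QRelType Y Z,
      is_Qrel psi' /\ rle (compose psi' phi) xi /\ v = psi' y z).

(* psi ↘ xi : the largest Q-relation phi' (from X to Y) with psi o phi' <= xi,
   for psi : Y -> Z, xi : X -> Z. *)
Definition lift_right (X Y Z : QSubset) (psi : QRelType Y Z) (xi : QRelType X Z)
  : QRelType X Y :=
  fun x y => qsup (fun v => exists phi' : QRelType X Y,
      is_Qrel phi' /\ rle (compose psi phi') xi /\ v = phi' x y).

Record QPreSubset := {
  qp_sub :> QSubset;
  qp_hom : QRelType qp_sub qp_sub;
  qp_hom_rel : is_Qrel qp_hom;
  qp_refl : rle (@idrel qp_sub) qp_hom;
  qp_trans : rle (compose qp_hom qp_hom) qp_hom
}.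
Arguments qp_hom : clear implicits.

Definition is_distributor (X Y : QPreSubset) (phi : QRelType X Y) : Prop :=
  is_Qrel phi /\ rle (compose (qp_hom Y) (compose phi (qp_hom X))) phi.

Definition inP (X : QPreSubset) (q : Q) (mu : QRelType X (one q)) : Prop :=
  is_Qrel mu /\ rle (compose mu (qp_hom X)) mu.

Definition inPd (X : QPreSubset) (q : Q) (lam : QRelType (one q) X) : Prop :=
  is_Qrel lam /\ rle (compose (qp_hom X) lam) lam.

Definition up_map (X Y : QPreSubset) (phi : QRelType X Y) (q : Q)
  (mu : QRelType X (one q)) : QRelType (one q) Y :=
  lift_left phi mu.

Definition down_map (X Y : QPreSubset) (phi : QRelType X Y) (q : Q)
  (lam : QRelType (one q) Y) : QRelType X (one q) :=
  lift_right lam phi.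

Definition star_map (X Y : QPreSubset) (phi : QRelType X Y) (q : Q)
  (mu : QRelType Y (one q)) : QRelType X (one q) :=
  compose mu phi.

Definition dagger_map (X Y : QPreSubset) (phi : QRelType X Y) (q : Q)
  (lam : QRelType (one q) X) : QRelType (one q) Y :=
  compose phi lam.

End Q.

(* Each of the four maps determines the distributor from its values on
   representables.  For phi^* and phi^dagger this is the unit law
   1_Y o phi = phi = phi o 1_X of a distributor: phi^*(1_Y(-,y)) = phi(-,y) and
   phi^dagger(1_X(x,-)) = phi(x,-).  For phi_up and phi^down it is a Yoneda
   argument: phi(x,-) is the largest lambda with lambda o 1_X(-,x) <= phi, so
   phi_up(1_X(-,x)) = phi(x,-), and dually phi^down(1_Y(y,-)) = phi(-,y). *)
From Stdlib Require Import FunctionalExtensionality Setoid.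

Section QuantaleFacts.
Context {Q : Quantale}.

Lemma qsup_pair_le (a b : Q) : qle a b -> qsup (fun v => v = a \/ v = b) = b.
Proof.
  intros Hab. apply qle_antisym.
  - apply qsup_least. intros v [-> | ->]; [exact Hab | apply qle_refl].
  - apply qsup_ub. right; reflexivity.
Qed.

Lemma qmul_mono_l (a b c : Q) : qle a b -> qle (qmul a c) (qmul b c).
Proof.
  intros Hab. rewrite <- (qsup_pair_le a b Hab), qmul_sup_l.
  apply qsup_ub. exists a. split; [left |]; reflexivity.
Qed.

Lemma qmul_mono_r (a b c : Q) : qle a b -> qle (qmul c a) (qmul c b).
Proof.
  intros Hab. rewrite <- (qsup_pair_le a b Hab), qmul_sup_r.
  apply qsup_ub. exists a. split; [left |]; reflexivity.
Qed.

Lemma rdiv_mul_le (r q : Q) : qle (qmul (rdiv r q) q) r.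
Proof.
  unfold rdiv. rewrite qmul_sup_l. apply qsup_least.
  intros v [p [Hp ->]]. exact Hp.
Qed.

Lemma le_rdiv (p q r : Q) : qle (qmul p q) r -> qle p (rdiv r q).
Proof. intros Hpq. apply qsup_ub. exact Hpq. Qed.

Lemma rdiv_mono (r r' q : Q) : qle r r' -> qle (rdiv r q) (rdiv r' q).
Proof. intros Hr. apply le_rdiv. eapply qle_trans; [apply rdiv_mul_le | exact Hr]. Qed.

Lemma le_mul_rdiv_l (q a r : Q) : qle q a -> qle r (qmul (rdiv a q) r).
Proof.
  intros Hqa. rewrite <- (qmul_e_l r) at 1.
  apply qmul_mono_l, le_rdiv. rewrite qmul_e_l. exact Hqa.
Qed.

Lemma inDQ_le_mul_rdiv {p q u a : Q} :
  inDQ p q u -> qle p a -> qle u (qmul (rdiv u p) a).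
Proof. intros [Hu _] Hpa. rewrite <- Hu at 1. apply qmul_mono_r, Hpa. Qed.

End QuantaleFacts.

Section QRelations.
Context {Q : Quantale}.

Lemma rel_ext {X Y : QSubset Q} (phi psi : QRelType X Y) :
  (forall x y, phi x y = psi x y) -> phi = psi.
Proof.
  intros H. apply functional_extensionality; intro x.
  apply functional_extensionality; intro y. apply H.
Qed.

Lemma compose_ub {X Y Z : QSubset Q} (psi : QRelType Y Z) (phi : QRelType X Y)
  (x : X) (y : Y) (z : Z) :
  qle (qmul (rdiv (psi y z) (qs_val y)) (phi x y)) (compose psi phi x z).
Proof. apply qsup_ub. exists y. reflexivity. Qed.

Lemma compose_mono {X Y Z : QSubset Q} (psi psi' : QRelType Y Z)
  (phi phi' : QRelType X Y) :
  rle psi psi' -> rle phi phi' -> rle (compose psi phi) (compose psi' phi').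
Proof.
  intros Hpsi Hphi x z. apply qsup_least. intros v [y ->].
  eapply qle_trans; [| apply compose_ub].
  eapply qle_trans; [apply qmul_mono_l, rdiv_mono, Hpsi | apply qmul_mono_r, Hphi].
Qed.

Lemma compose_one {X Z : QSubset Q} (q : Q) (lam : QRelType (one q) Z)
  (mu : QRelType X (one q)) (x : X) (z : Z) :
  compose lam mu x z = qmul (rdiv (lam tt z) q) (mu x tt).
Proof.
  apply qle_antisym.
  - apply qsup_least. intros v [[] ->]. apply qle_refl.
  - apply (compose_ub lam mu x tt z).
Qed.

Lemma qp_hom_diag (X : QPreSubset Q) (x : X) : qle (qs_val x) (@qp_hom _ X x x).
Proof. eapply qle_trans; [| apply qp_refl]. apply qsup_ub. split; reflexivity. Qed.

Lemma le_compose_hom_l {X : QSubset Q} {Y : QPreSubset Q} (xi : QRelType X Y) :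
  rle xi (compose (@qp_hom _ Y) xi).
Proof.
  intros x y. eapply qle_trans; [| apply (compose_ub _ _ x y)].
  apply le_mul_rdiv_l, qp_hom_diag.
Qed.

Lemma le_compose_hom_r {X : QPreSubset Q} {Y : QSubset Q} (xi : QRelType X Y) :
  is_Qrel xi -> rle xi (compose xi (@qp_hom _ X)).
Proof.
  intros Hxi x y. eapply qle_trans; [| apply (compose_ub _ _ x x)].
  apply (inDQ_le_mul_rdiv (Hxi x y)), qp_hom_diag.
Qed.

Lemma distributor_compose_hom_l {X Y : QPreSubset Q} {phi : QRelType X Y} :
  is_distributor phi -> compose (@qp_hom _ Y) phi = phi.
Proof.
  intros [Hphi Hdist]. apply rel_ext. intros x y.
  apply qle_antisym; [| apply le_compose_hom_l].
  eapply qle_trans; [| apply Hdist].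
  apply compose_mono; [intros ? ?; apply qle_refl | apply le_compose_hom_r, Hphi].
Qed.

Lemma distributor_compose_hom_r {X Y : QPreSubset Q} {phi : QRelType X Y} :
  is_distributor phi -> compose phi (@qp_hom _ X) = phi.
Proof.
  intros [Hphi Hdist]. apply rel_ext. intros x y.
  apply qle_antisym; [| apply le_compose_hom_r, Hphi].
  eapply qle_trans; [apply le_compose_hom_l | apply Hdist].
Qed.

End QRelations.

Section Representables.
Context {Q : Quantale}.

Definition hom_to {X : QPreSubset Q} (x : X) : QRelType X (one (qs_val x)) :=
  fun x' _ => @qp_hom _ X x' x.

Definition hom_from {X : QPreSubset Q} (x : X) : QRelType (one (qs_val x)) X :=
  fun _ x' => @qp_hom _ X x x'.

Lemma hom_to_inP {X : QPreSubset Q} (x : X) : inP (hom_to x).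
Proof. split; intros x' []; [apply qp_hom_rel | apply qp_trans]. Qed.

Lemma hom_from_inPd {X : QPreSubset Q} (x : X) : inPd (hom_from x).
Proof. split; intros [] x'; [apply qp_hom_rel | apply qp_trans]. Qed.

Context {X Y : QPreSubset Q} {phi : QRelType X Y}.
Hypothesis Hphi : is_distributor phi.

Lemma star_map_hom_to (x : X) (y : Y) : star_map phi (hom_to y) x tt = phi x y.
Proof. exact (f_equal (fun f => f x y) (distributor_compose_hom_l Hphi)). Qed.

Lemma dagger_map_hom_from (x : X) (y : Y) :
  dagger_map phi (hom_from x) tt y = phi x y.
Proof. exact (f_equal (fun f => f x y) (distributor_compose_hom_r Hphi)). Qed.

Lemma up_map_hom_to (x : X) (y : Y) : up_map phi (hom_to x) tt y = phi x y.
Proof.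
  apply qle_antisym.
  - apply qsup_least. intros v [lam [Hlam [Hle ->]]].
    eapply qle_trans; [| apply (Hle x y)]. rewrite compose_one.
    apply (inDQ_le_mul_rdiv (Hlam tt y)), qp_hom_diag.
  - apply qsup_ub. exists (fun _ y' => phi x y'). split; [| split]; [| | reflexivity].
    + intros [] y'. apply (proj1 Hphi).
    + intros x' y'. rewrite compose_one.
      pose proof (compose_ub phi (@qp_hom _ X) x' x y') as Hub.
      rewrite (distributor_compose_hom_r Hphi) in Hub. exact Hub.
Qed.

Lemma down_map_hom_from (x : X) (y : Y) : down_map phi (hom_from y) x tt = phi x y.
Proof.
  apply qle_antisym.
  - apply qsup_least. intros v [mu [Hmu [Hle ->]]].
    eapply qle_trans; [| apply (Hle x y)]. rewrite compose_one.
    apply le_mul_rdiv_l, qp_hom_diag.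
  - apply qsup_ub. exists (fun x' _ => phi x' y). split; [| split]; [| | reflexivity].
    + intros x' []. apply (proj1 Hphi).
    + intros x' y'. rewrite compose_one.
      pose proof (compose_ub (@qp_hom _ Y) phi x' y y') as Hub.
      rewrite (distributor_compose_hom_l Hphi) in Hub. exact Hub.
Qed.

End Representables.

Section Injectivity.
Context {Q : Quantale} {X Y : QPreSubset Q} {phi psi : QRelType X Y}.
Hypotheses (Hphi : is_distributor phi) (Hpsi : is_distributor psi).

Lemma up_map_inj_iff :
  (forall (q : Q) (mu : QRelType X (one q)), inP mu ->
     up_map phi mu = up_map psi mu) <-> phi = psi.
Proof.
  split; [| intros E; rewrite E; reflexivity].
  intros Hup. apply rel_ext. intros x y.
  rewrite <- (up_map_hom_to Hphi), <- (up_map_hom_to Hpsi).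
  rewrite (Hup _ _ (hom_to_inP x)). reflexivity.
Qed.

Lemma down_map_inj_iff :
  (forall (q : Q) (lam : QRelType (one q) Y), inPd lam ->
     down_map phi lam = down_map psi lam) <-> phi = psi.
Proof.
  split; [| intros E; rewrite E; reflexivity].
  intros Hdown. apply rel_ext. intros x y.
  rewrite <- (down_map_hom_from Hphi), <- (down_map_hom_from Hpsi).
  rewrite (Hdown _ _ (hom_from_inPd y)). reflexivity.
Qed.

Lemma star_map_inj_iff :
  (forall (q : Q) (mu : QRelType Y (one q)), inP mu ->
     star_map phi mu = star_map psi mu) <-> phi = psi.
Proof.
  split; [| intros E; rewrite E; reflexivity].
  intros Hstar. apply rel_ext. intros x y.
  rewrite <- (star_map_hom_to Hphi), <- (star_map_hom_to Hpsi).
  rewrite (Hstar _ _ (hom_to_inP y)). reflexivity.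
Qed.

Lemma dagger_map_inj_iff :
  (forall (q : Q) (lam : QRelType (one q) X), inPd lam ->
     dagger_map phi lam = dagger_map psi lam) <-> phi = psi.
Proof.
  split; [| intros E; rewrite E; reflexivity].
  intros Hdagger. apply rel_ext. intros x y.
  rewrite <- (dagger_map_hom_from Hphi), <- (dagger_map_hom_from Hpsi).
  rewrite (Hdagger _ _ (hom_from_inPd x)). reflexivity.
Qed.

End Injectivity.

Theorem proposition4p21 (Q : Quantale) (X Y : QPreSubset Q)
  (phi psi : QRelType X Y) :
  is_distributor phi -> is_distributor psi ->
  (phi = psi <->
     (forall (q : Q) (mu : QRelType X (one q)), inP mu ->
        up_map phi mu = up_map psi mu)) /\
  ((forall (q : Q) (mu : QRelType X (one q)), inP mu ->
        up_map phi mu = up_map psi mu) <->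
     (forall (q : Q) (lam : QRelType (one q) Y), inPd lam ->
        down_map phi lam = down_map psi lam)) /\
  ((forall (q : Q) (lam : QRelType (one q) Y), inPd lam ->
        down_map phi lam = down_map psi lam) <->
     (forall (q : Q) (mu : QRelType Y (one q)), inP mu ->
        star_map phi mu = star_map psi mu)) /\
  ((forall (q : Q) (mu : QRelType Y (one q)), inP mu ->
        star_map phi mu = star_map psi mu) <->
     (forall (q : Q) (lam : QRelType (one q) X), inPd lam ->
        dagger_map phi lam = dagger_map psi lam)).
Proof.
  intros Hphi Hpsi.
  rewrite (up_map_inj_iff Hphi Hpsi), (down_map_inj_iff Hphi Hpsi),
    (star_map_inj_iff Hphi Hpsi), (dagger_map_inj_iff Hphi Hpsi).
  tauto.
Qed.
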